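(* Let $g,f$ be constraints such that $f$ is non-trivial and $\deg(g)\le\deg(f)$. Then there exist $M$, constraints $f_1,\dots,f_M$ each expressible by $f$ with constants, index tuples $(j_i^1,\dots,j_i^{\mathrm{ar}(f_i)})$ with entries in $[\mathrm{ar}(g)]$, and rationals $\alpha_1,\dots,\alpha_M\in\mathbb{Q}$ such that for all $x\in\{0,1\}^{\mathrm{ar}(g)}$, $$g(x_1,\dots,x_{\mathrm{ar}(g)})=\sum_{i=1}^M\alpha_i\cdot f_i(x_{j_i^1},\dots,x_{j_i^{\mathrm{ar}(f_i)}}).$$
   Context: A $k$-ary constraint is $f\colon\{0,1\}^k\to\{0,1\}$ ($k=\mathrm{ar}(f)$), trivial if it is constant. Its characteristic polynomial $P_f$ is the unique multilinear polynomial over $\mathbb{R}$ in $k$ variables with $P_f(x)=f(x)$ for all $x\in\{0,1\}^k$; $\deg(f)=\deg(P_f)$. A $d$-ary constraint $h$ is expressible by $f$ with constants if $h(x_1,\dots,x_d)=f(\xi_1,\dots,\xi_k)$ identically, where each $\xi_j$ is either a variable $x_i$ for some $i\in[d]$ or one of the constants $0,1$. *)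

From mathcomp Require Import all_boot all_order all_algebra.
Set Implicit Arguments. Unset Strict Implicit. Unset Printing Implicit Defensive.
Import Order.TTheory GRing.Theory Num.Theory.
Local Open Scope ring_scope.

Definition constraint (k : nat) := ('I_k -> bool) -> bool.

Definition nontrivial k (f : constraint k) : Prop := exists x y, f x != f y.

(* A multilinear polynomial in k variables, given by its coefficient family
   c : {set 'I_k} -> rat, i.e. P(x) = \sum_S c_S \prod_{i in S} x_i. *)
Definition mlpoly (k : nat) := {set 'I_k} -> rat.

Definition mleval k (P : mlpoly k) (x : 'I_k -> bool) : rat :=
  \sum_(S : {set 'I_k}) P S * \prod_(i in S) ((x i)%:R : rat).

(* P is the characteristic polynomial of f: it agrees with f on {0,1}^k
   (such a multilinear P exists and is unique). *)
Definition is_char_poly k (f : constraint k) (P : mlpoly k) : Prop :=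
  forall x, mleval P x = (f x)%:R.

(* total degree of a multilinear polynomial (0 for the zero polynomial) *)
Definition mldeg k (P : mlpoly k) : nat :=
  \max_(S : {set 'I_k} | P S != 0) #|S|.

Definition deg_le k l (g : constraint k) (f : constraint l) : Prop :=
  forall Pg Pf, is_char_poly g Pg -> is_char_poly f Pf -> (mldeg Pg <= mldeg Pf)%N.

Definition expressible d k (h : constraint d) (f : constraint k) : Prop :=
  exists xi : 'I_k -> 'I_d + bool,
    forall x : 'I_d -> bool,
      h x = f (fun j => match xi j with inl i => x i | inr b => b end).

From mathcomp Require Import all_boot all_order all_algebra.
From Stdlib Require Import FunctionalExtensionality.
Set Implicit Arguments. Unset Strict Implicit. Unset Printing Implicit Defensive.
Import GRing.Theory Num.Theory.
Local Open Scope ring_scope.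

(* Write g = \sum_S c_S x^S in the Möbius basis of monomials.  It suffices to
   express each monomial x^S with c_S <> 0 by f.  Pick T with |T| = deg f and
   nonzero coefficient d_T in f; then |S| <= deg g <= |T|.  The Möbius
   coefficient of f at T, computed after zeroing the variables outside T and
   substituting for those inside T variables of S (each used at least once)
   or the constant 1, is d_T * x^S: the alternating sum vanishes as soon as
   one substituted value is 0.  Dividing by d_T expresses x^S. *)

Section Toggle.
Variables (T : finType) (j : T).

Definition toggle (U : {set T}) : {set T} := if j \in U then U :\ j else j |: U.

Lemma toggleK : involutive toggle.
Proof.
move=> U; rewrite /toggle; have [hj|hj] := boolP (j \in U).
  by rewrite setD11 setD1K.
by rewrite setU11 setU1K.
Qed.

Lemma in_toggle i (U : {set T}) : (i \in toggle U) = (if i == j then j \notin U else i \in U).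
Proof.
rewrite /toggle; have [hj|hj] := boolP (j \in U); rewrite ?in_setD1 ?in_setU1;
  by case: eqP => [->|].
Qed.

Lemma sign_toggle (R : pzRingType) (U : {set T}) : (-1) ^+ #|toggle U| = - (-1) ^+ #|U| :> R.
Proof.
rewrite /toggle; have [hj|hj] := boolP (j \in U).
  by rewrite [in RHS](cardsD1 j U) hj exprS mulN1r opprK.
by rewrite cardsU1 hj exprS mulN1r.
Qed.

Lemma toggle_subset (X U : {set T}) : j \in X -> (toggle U \subset X) = (U \subset X).
Proof.
move=> hj; apply/subsetP/subsetP => h i; have [->|ne] := eqVneq i j => // hi;
  by apply: h; rewrite in_toggle (negbTE ne) in hi *.
Qed.

Lemma subset_toggle (U S : {set T}) : j \notin U -> (U \subset toggle S) = (U \subset S).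
Proof.
move=> hj; apply/subsetP/subsetP => h i hi; have ne : i != j by apply: contraNneq hj => <-.
  by have := h i hi; rewrite in_toggle (negbTE ne).
by rewrite in_toggle (negbTE ne) h.
Qed.

(* toggle is a sign-reversing involution on the terms of the sum *)
Lemma sum_sign_toggle_eq0 (R : numDomainType) (P : pred {set T}) (F : {set T} -> R) :
  (forall U, P (toggle U) = P U) -> (forall U, F (toggle U) = F U) ->
  \sum_(U | P U) (-1) ^+ #|U| * F U = 0.
Proof.
move=> hP hF; set s := (X in X = 0).
have hs : s = - s.
  rewrite /s {1}(reindex_inj (can_inj toggleK)) -sumrN.
  by apply: eq_big => U; rewrite ?hP // sign_toggle hF mulNr.
have : s *+ 2 == 0 by rewrite mulr2n {1}hs addNr.
by rewrite mulrn_eq0 => /eqP.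
Qed.

End Toggle.

Lemma mleval_indicator k (P : mlpoly k) (x : 'I_k -> bool) :
  mleval P x = \sum_S P S * (S \subset [set i | x i])%:R.
Proof.
apply: eq_bigr => S _; congr (_ * _); have [hS|hS] := boolP (S \subset _).
  by apply: big1 => i /(subsetP hS); rewrite inE => ->.
have [i hiS] := subsetPn hS; rewrite inE => /negbTE hi.
by rewrite (bigD1 i) //= hi mul0r.
Qed.

Lemma card_le_mldeg k (P : mlpoly k) S : P S != 0 -> (#|S| <= mldeg P)%N.
Proof. exact: (leq_bigmax_cond (F := fun S : {set 'I_k} => #|S|)). Qed.

Lemma mldeg_attained k (P : mlpoly k) S : P S != 0 ->
  exists2 T, P T != 0 & #|T| = mldeg P.
Proof.
move=> hS; have [|T hT hmax] := eq_bigmax_cond (A := [pred S | P S != 0]) (fun S => #|S|).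
  by apply/card_gt0P; exists S.
by exists T; rewrite // -hmax.
Qed.

Definition mobius k (f : constraint k) : mlpoly k :=
  fun S => \sum_(U : {set 'I_k} | U \subset S)
              (-1) ^+ (#|S| + #|U|) * (f (fun i => i \in U))%:R.

Lemma sum_sign_interval (T : finType) (U X : {set T}) : U \subset X ->
  \sum_(S : {set T} | (S \subset X) && (U \subset S)) (-1) ^+ (#|S| + #|U|)
  = (U == X)%:R :> rat.
Proof.
move=> hUX; have [->|hne] := eqVneq U X.
  rewrite (big_pred1 X) => [|S]; last by rewrite /= eqEsubset.
  by rewrite addnn -mul2n exprM sqrrN !expr1n.
have [j hjX hjU] : exists2 j, j \in X & j \notin U.
  by apply/subsetPn; apply: contra hne => hXU; rewrite eqEsubset hUX.
under eq_bigr do rewrite exprD.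
rewrite (sum_sign_toggle_eq0 (j := j)) // => S.
by rewrite toggle_subset // subset_toggle.
Qed.

Lemma mobius_char_poly k (f : constraint k) : is_char_poly f (mobius f).
Proof.
move=> x; rewrite mleval_indicator; set X := [set i | x i].
under eq_bigr do rewrite mulr_natr mulrb.
rewrite -big_mkcond /= /mobius (exchange_big_dep (fun U : {set 'I_k} => U \subset X)) /=;
  last by move=> S U hSX hUS; apply: subset_trans hUS hSX.
rewrite (bigD1 X) //= [Y in _ + Y]big1 => [|U /andP[hUX hne]].
  have -> : (fun i => i \in X) = x by apply: functional_extensionality => i; rewrite inE.
  by rewrite -mulr_suml sum_sign_interval // eqxx mul1r addr0.
by rewrite -mulr_suml sum_sign_interval // (negbTE hne) mul0r.
Qed.

Lemma mobius_neq0 k (f : constraint k) : nontrivial f -> exists T, mobius f T != 0.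
Proof.
move=> [a [b hab]]; have [x hx] : exists x, f x.
  by case ha: (f a); [exists a | exists b; move: hab; rewrite ha; case: (f b)].
case: (pickP (fun T => mobius f T != 0)) => [T hT|h0]; first by exists T.
have := mobius_char_poly f x; rewrite /mleval hx big1 => [/eqP|S _].
  by rewrite eq_sym oner_eq0.
by move/negbFE/eqP: (h0 S) => ->; rewrite mul0r.
Qed.

(* [e] puts a variable of A, or the constant 1 for [None], in place of each
   variable of B; this turns the monomial x^B into x^A. *)
Lemma monomial_substitution (aT rT : finType) (A : {set aT}) (B : {set rT}) :
  (#|A| <= #|B|)%N -> exists e : rT -> option aT, forall x : aT -> bool,
    (B \subset [set j | oapp x true (e j)]) = (A \subset [set i | x i]).
Proof.
move=> hAB; pose e j := nth None (map Some (enum A)) (index j (enum B)).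
have eA j a : e j = Some a -> a \in A.
  move=> ej; have : Some a \in map Some (enum A).
    rewrite -ej mem_nth //; case: ltnP => // hge.
    by move: ej; rewrite /e nth_default.
  by case/mapP => a' ha' [->]; rewrite mem_enum in ha'.
have eB a : a \in A -> exists2 j, j \in B & e j = Some a.
  move=> ha; have hi : (index a (enum A) < #|B|)%N.
    by apply: leq_trans hAB; rewrite cardE index_mem mem_enum.
  have [b0 _] := card_gt0P (leq_ltn_trans (leq0n _) hi).
  have hiB : (index a (enum A) < size (enum B))%N by rewrite -cardE.
  exists (nth b0 (enum B) (index a (enum A))); first by rewrite -mem_enum mem_nth.
  rewrite /e index_uniq ?enum_uniq // (nth_map a) ?nth_index ?mem_enum //.
  by rewrite index_mem mem_enum.
exists e => x; apply/subsetP/subsetP => h.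
  by move=> a /eB[j /h]; rewrite !inE => + ej; rewrite ej.
by move=> j _; rewrite inE; case ej: (e j) => [a|] //=; have := h a (eA _ _ ej); rewrite inE.
Qed.

Lemma mobius_masked k (f : constraint k) (T : {set 'I_k}) (y : 'I_k -> bool) :
  \sum_(U : {set 'I_k} | U \subset T)
    (-1) ^+ (#|T| + #|U|) * (f (fun j => (j \in U) && y j))%:R
  = (T \subset [set j | y j])%:R * mobius f T.
Proof.
have [hT|hT] := boolP (T \subset _).
  rewrite mul1r; apply: eq_bigr => U hU; congr (_ * (f _)%:R).
  apply: functional_extensionality => j; apply/andb_idr => /(subsetP hU).
  by move/(subsetP hT); rewrite inE.
have [j hjT] := subsetPn hT; rewrite inE => /negbTE hj.
under eq_bigr do rewrite exprD -mulrA.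
rewrite mul0r -mulr_sumr (sum_sign_toggle_eq0 (j := j)) ?mulr0 // => U.
  by rewrite toggle_subset.
congr (f _)%:R; apply: functional_extensionality => i; rewrite in_toggle.
by case: eqP => [->|]; rewrite ?hj ?andbF.
Qed.

Section Representable.
Variables (m k : nat) (f : constraint k).

Definition representable (h : ('I_m -> bool) -> rat) : Prop :=
  exists s : seq (rat * {c : constraint m | expressible c f}),
    forall x, h x = \sum_(p <- s) p.1 * (sval p.2 x)%:R.

Lemma representable_ext h1 h2 : representable h1 -> h1 =1 h2 -> representable h2.
Proof. by move=> [s hs] e; exists s => x; rewrite -e hs. Qed.

Lemma representable0 : representable (fun _ => 0).
Proof. by exists [::] => x; rewrite big_nil. Qed.

Lemma representableD h1 h2 :
  representable h1 -> representable h2 -> representable (fun x => h1 x + h2 x).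
Proof. by move=> [s1 e1] [s2 e2]; exists (s1 ++ s2) => x; rewrite big_cat e1 e2. Qed.

Lemma representableZ c h : representable h -> representable (fun x => c * h x).
Proof.
move=> [s e]; exists (map (fun p => (c * p.1, p.2)) s) => x.
by rewrite big_map e mulr_sumr; apply: eq_bigr => p _; rewrite mulrA.
Qed.

Lemma representable_expressible (c : constraint m) :
  expressible c f -> representable (fun x => (c x)%:R).
Proof. by move=> hc; exists [:: (1, exist _ c hc)] => x; rewrite big_seq1 mul1r. Qed.

Lemma representable_sum (I : Type) (r : seq I) (P : pred I) (F : I -> ('I_m -> bool) -> rat) :
  (forall i, P i -> representable (F i)) ->
  representable (fun x => \sum_(i <- r | P i) F i x).
Proof.
move=> hF; elim: r => [|i r IH].
  by apply: representable_ext representable0 _ => x; rewrite big_nil.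
have [hi|hi] := boolP (P i).
  by apply: representable_ext (representableD (hF i hi) IH) _ => x; rewrite big_cons hi.
by apply: representable_ext IH _ => x; rewrite big_cons (negbTE hi).
Qed.

Lemma representable_monomial (S : {set 'I_m}) (T : {set 'I_k}) :
  mobius f T != 0 -> (#|S| <= #|T|)%N ->
  representable (fun x => (S \subset [set i | x i])%:R).
Proof.
move=> hfT /monomial_substitution[e he].
pose y x j := oapp x true (e j).
have hU U : expressible (fun x => f (fun j => (j \in U) && y x j)) f.
  exists (fun j => if j \in U then oapp inl (inr true) (e j) else inr false) => x.
  congr f; apply: functional_extensionality => j.
  by rewrite /y; case: (j \in U) (e j) => [] [].
have hsum : representable (fun x => \sum_(U : {set 'I_k} | U \subset T)
    (-1) ^+ (#|T| + #|U|) * (f (fun j => (j \in U) && y x j))%:R).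
  by apply: representable_sum => U _; apply/representableZ/representable_expressible/hU.
apply: representable_ext (representableZ (mobius f T)^-1 hsum) _ => x.
by rewrite mobius_masked he mulrC mulfK.
Qed.

Lemma representable_mleval (P : mlpoly m) :
  nontrivial f -> (mldeg P <= mldeg (mobius f))%N -> representable (mleval P).
Proof.
move=> /mobius_neq0[? /mldeg_attained[T hfT hT]] hP.
apply: representable_ext (fun x => esym (mleval_indicator P x)).
apply: representable_sum => S _; have [->|hS] := eqVneq (P S) 0.
  by apply: representable_ext representable0 _ => x; rewrite mul0r.
apply/representableZ/(representable_monomial hfT).
by rewrite hT (leq_trans (card_le_mldeg hS)).
Qed.

End Representable.

Theorem proposition16 (m k : nat) (g : constraint m) (f : constraint k) :
  nontrivial f -> deg_le g f ->
  exists (M : nat) (ar : 'I_M -> nat)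
         (fs : forall i : 'I_M, constraint (ar i))
         (js : forall i : 'I_M, 'I_(ar i) -> 'I_m)
         (alpha : 'I_M -> rat),
    (forall i, expressible (fs i) f) /\
    forall x : 'I_m -> bool,
      ((g x)%:R : rat) = \sum_(i < M) alpha i * ((fs i (fun t => x (js i t)))%:R : rat).
Proof.
move=> hf hdeg.
have [s hs] := representable_mleval hf (hdeg _ _ (mobius_char_poly g) (mobius_char_poly f)).
pose p i := tnth (in_tuple s) i.
exists (size s), (fun _ => m), (fun i => sval (p i).2), (fun _ t => t), (fun i => (p i).1).
split => [i|x]; first exact: (svalP (p i).2).
by rewrite -(mobius_char_poly g x) hs big_tnth.
Qed.
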